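(* Let $k\geq1$, $n\geq2k$, let $\mathcal{S},\mathcal{T}$ be antichains in $\mathcal{F}_{2k}^{[1,n]}$ with $\mathcal{T}\prec_p\mathcal{S}$, and let $j\geq1$. For each $i\geq 1$ set $$D_i:=\Big(B\big(\mathcal{S}([i,i+1]),i+2\big)\setminus B\big(\mathcal{T}([i,i+1]),i+2\big)\Big)*\overline{[i,i+1]},$$ and for $1\leq\ell\leq k$ set $$\Gamma_{j,\ell}:=B\big(\mathcal{S}([j+1,j+2\ell]),j+2\ell+1\big)\setminus B\big(\mathcal{T}([j,j+2\ell-1]),j+2\ell+1\big).$$ If $D_{j+1}$ is not the void complex, then $$D_j\cap D_{j+1}=\bigcup_{\ell=1}^{k}\Big(\Gamma_{j,\ell}*\overline{[j+1,j+2\ell-1]}\Big).$$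
   Context: Notation: $[m,n]=\{m,\dots,n\}$; $d$-subsets of $[n]$ are identified with increasing vectors; $G\leq_p F$ means componentwise $\leq$ and $G\prec_p F$ means $G\leq_p F-\mathbf{1}_d$ ($\mathbf{1}_d$ the all-ones vector). For $r\geq1$, $\mathcal{F}_{2r}^{[m,n]}$ is the set of sets $\{i_1,i_1+1,\dots,i_r,i_r+1\}$ with $m\leq i_1$, $i_r\leq n-1$, $i_j\leq i_{j+1}-2$, ordered by $\leq_p$; $\mathcal{F}_0^{[m,n]}=\{\emptyset\}$. For antichains, $\mathcal{T}\prec_p\mathcal{S}$ means every $G\in\mathcal{T}$ satisfies $G\prec_p F$ for some $F\in\mathcal{S}$. $\mathcal{F}_{2r}(\mathcal{S})$ is the order ideal generated by $\mathcal{S}$. For $1\leq\ell\leq k$ and $J=[j,j+2\ell-1]$, $\mathcal{S}(J)\subseteq\mathcal{F}_{2(k-\ell)}^{[1,n]}$ is the set of maximal elements of $\{H\in\mathcal{F}_{2(k-\ell)}^{[1,n]}: H\subseteq[j+2\ell,n],\ J\cup H\in\mathcal{F}(\mathcal{S})\}$. $B(\mathcal{S}(J),m)$ is the pure simplicial complex whose facets are the sets of $\mathcal{F}_{2(k-\ell)}(\mathcal{S}(J))\cap\mathcal{F}_{2(k-\ell)}^{[m,n]}$. For pure complexes $X,Y$, $X\setminus Y$ is the complex generated by the facets of $X$ that are not facets of $Y$. $\overline{V}$ is the full simplex on $V$ ($\overline{\emptyset}=\{\emptyset\}$), $*$ is the join (the join with the void complex, which has no faces, is void). *)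

From HB Require Import structures.
From mathcomp Require Import all_boot all_order.
From mathcomp Require Import finmap.
Set Implicit Arguments. Unset Strict Implicit. Unset Printing Implicit Defensive.
Local Open Scope fset_scope.

Definition interval (a b : nat) : {fset nat} := [fset x | x in iota a (b.+1 - a)].

Definition vecof (G : {fset nat}) : seq nat := sort leq (enum_fset G).

Definition lep (G F : {fset nat}) : Prop :=
  #|` G| = #|` F| /\ forall i, i < #|` G| -> nth 0 (vecof G) i <= nth 0 (vecof F) i.

(* G <_p F : G <=_p F - 1_d, i.e. componentwise G_i <= F_i - 1 (over Z) *)
Definition ltp (G F : {fset nat}) : Prop :=
  #|` G| = #|` F| /\ forall i, i < #|` G| -> (nth 0 (vecof G) i).+1 <= nth 0 (vecof F) i.

Definition pairset (s : seq nat) : {fset nat} :=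
  [fset x | x in flatten [seq [:: i; i.+1] | i <- s]].

(* Fam2 r m n H  <->  H \in F_{2r}^{[m,n]}  (r = number of pairs) *)
Definition Fam2 (r m n : nat) (H : {fset nat}) : Prop :=
  exists s : seq nat, size s = r /\ sorted (fun a b => a.+2 <= b) s /\
    all (fun i => (m <= i) && (i.+1 <= n)) s /\ H = pairset s.

Definition antichain (k n : nat) (S : {fset {fset nat}}) : Prop :=
  (forall F, F \in S -> Fam2 k 1 n F) /\
  (forall F G, F \in S -> G \in S -> lep F G -> F = G).

Definition precp (T S : {fset {fset nat}}) : Prop :=
  forall G, G \in T -> exists2 F, F \in S & ltp G F.

Definition ideal (r n : nat) (P : {fset nat} -> Prop) (G : {fset nat}) : Prop :=
  Fam2 r 1 n G /\ exists F, P F /\ lep G F.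

(* S(J) for J = [j, j+2l-1] *)
Definition SJ (k n : nat) (S : {fset {fset nat}}) (j l : nat) (H : {fset nat}) : Prop :=
  let Q := fun H => Fam2 (k - l) 1 n H /\ H `<=` interval (j + 2 * l) n /\
                    ideal k n (fun F => F \in S) (interval j (j + 2 * l - 1) `|` H) in
  Q H /\ forall H', Q H' -> lep H H' -> H' = H.

Definition complex := {fset nat} -> Prop.

Definition gen (P : {fset nat} -> Prop) : complex :=
  fun s => exists F, P F /\ s `<=` F.

(* facets of B(P, m), P \subseteq F_{2(k-l)}^{[1,n]} *)
Definition Bfacets (k l n : nat) (P : {fset nat} -> Prop) (m : nat) (H : {fset nat}) : Prop :=
  ideal (k - l) n P H /\ Fam2 (k - l) m n H.

(* X \ Y for pure complexes given by their facets *)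
Definition cdiff (fX fY : {fset nat} -> Prop) : complex :=
  gen (fun F => fX F /\ ~ fY F).

Definition full (V : {fset nat}) : complex := fun s => s `<=` V.

Definition join (X Y : complex) : complex :=
  fun s => exists a b, X a /\ Y b /\ s = a `|` b.

Definition cap (X Y : complex) : complex := fun s => X s /\ Y s.

Definition D (k n : nat) (S T : {fset {fset nat}}) (i : nat) : complex :=
  join (cdiff (Bfacets k 1 n (SJ k n S i 1) (i + 2))
              (Bfacets k 1 n (SJ k n T i 1) (i + 2)))
       (full (interval i (i + 1))).

Definition Gamma (k n : nat) (S T : {fset {fset nat}}) (j l : nat) : complex :=
  cdiff (Bfacets k l n (SJ k n S (j + 1) l) (j + 2 * l + 1))
        (Bfacets k l n (SJ k n T j l) (j + 2 * l + 1)).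

From mathcomp Require Import all_boot all_order.
From mathcomp Require Import finmap.
From mathcomp Require Import zify.
From Stdlib Require Import Classical.
Set Implicit Arguments. Unset Strict Implicit. Unset Printing Implicit Defensive.
Local Open Scope fset_scope.

(* Lemma 3.9: if T <_p S are antichains in F_{2k}^{[1,n]}, then
     D_j ∩ D_{j+1} = ⋃_{l=1}^{k} Γ_{j,l} * [j+1, j+2l-1].

   A set {i_1, i_1+1, ..., i_r, i_r+1} of F_{2r} is encoded by the sequence of
   left ends [i_1; ...; i_r], a "gapped" sequence; <=_p and <_p become componentwise <= and <.
   [below X v] says that the set encoded by v lies in the order ideal generated by X, and
   [run j l] encodes the interval [j, j+2l-1]. The facets of B(X([j,j+2l-1]), m) are then the
   tails h starting at >= m with [below X (run j l ++ h)] (Bfacets_pairset); this describes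
   D_i and Γ_{j,l} * [j+1, j+2l-1] by sequences (D_char, Gamma_char).

   ⊇ (Gamma_sub_cap): a tail h for Γ_{j,l} yields the facets run j l ++ h of D_j and
   run (j+1) l ++ h of D_{j+1}.
   ⊆ (cap_sub_Gamma): a common face lies in j :: a (outside the ideal of T) and in
   j+1 :: b (inside the ideal of S). Split j :: a = run j L ++ A with L maximal, start from
   the componentwise minimum H of A and the matching part of b, and push H towards A one
   minimal step at a time (the descent): as long as run j L ++ H is in the ideal of T,
   T <_p S keeps run (j+1) L ++ H in the ideal of S after the step. The descent ends outside
   the ideal of T, giving a facet of Γ_{j,L} that still contains the common face. *)

Fixpoint flat (s : seq nat) : seq nat :=
  if s is i :: s' then i :: i.+1 :: flat s' else [::].

Lemma flat_cat s t : flat (s ++ t) = flat s ++ flat t.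
Proof. by elim: s => //= i s ->. Qed.

Lemma size_flat s : size (flat s) = 2 * size s.
Proof. elim: s => //= i s ->; lia. Qed.

Lemma mem_flat s x : (x \in flat s) = has (fun i => (x == i) || (x == i.+1)) s.
Proof. by elim: s => //= i s IH; rewrite !inE IH orbA. Qed.

Lemma mem_flat_cons i s (x : nat) : (x \in flat (i :: s)) = (i <= x <= i.+1) || (x \in flat s).
Proof. by rewrite /= !inE orbA; congr (_ || _); lia. Qed.

Lemma mem_pairset s x : (x \in pairset s) = (x \in flat s).
Proof.
rewrite /pairset in_fset; congr (x \in _).
by elim: s => //= i s ->.
Qed.

Lemma mem_interval a b x : (x \in interval a b) = (a <= x <= b).
Proof. rewrite /interval in_fset /= mem_iota; case: (leqP a x) => //= h; lia. Qed.

Definition gap2 (a b : nat) : bool := a.+2 <= b.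
Definition gapped (s : seq nat) : bool := sorted gap2 s.

Lemma gap2_trans : transitive gap2.
Proof. rewrite /gap2 => b a c; lia. Qed.

Lemma gapped_cons x s : gapped (x :: s) = all (gap2 x) s && gapped s.
Proof. by rewrite /gapped /= (path_sortedE gap2_trans). Qed.

Lemma gapped_tail x s : gapped (x :: s) -> gapped s.
Proof. by rewrite gapped_cons => /andP []. Qed.

Lemma gapped_head_lb x s : gapped (x :: s) -> all (fun i => x <= i) (x :: s).
Proof.
rewrite gapped_cons /= leqnn => /andP [hx _].
by apply: sub_all hx => y; rewrite /gap2; lia.
Qed.

Lemma gapped_map_succ s : gapped s -> gapped (map succn s).
Proof. by apply: homo_sorted => a b; rewrite /gap2. Qed.

Lemma flat_lb m s x : all (fun i => m <= i) s -> x \in flat s -> m <= x.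
Proof.
move=> /allP hs; rewrite mem_flat => /hasP [i /hs hi /orP [] /eqP ->]; lia.
Qed.

Lemma path_flat s y : path gap2 y s -> path ltn y.+1 (flat s).
Proof.
elim: s y => //= x s IH y /andP [hxy hs].
by apply/and3P; split; [rewrite /gap2 in hxy; lia | | exact: IH].
Qed.

Lemma mem_vecof G x : (x \in vecof G) = (x \in G).
Proof. by rewrite /vecof mem_sort. Qed.

Lemma vecof_pairset s : gapped s -> vecof (pairset s) = flat s.
Proof.
move=> hs; have : sorted ltn (flat s) by case: s hs => //= x s /path_flat /= ->; rewrite ltnSn.
rewrite ltn_sorted_uniq_leq => /andP [uniq_s sorted_s].
apply: (sorted_eq leq_trans anti_leq) => //; first exact/sort_sorted/leq_total.
rewrite /vecof perm_sort; apply: uniq_perm => //; first exact: fset_uniq.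
by move=> x; rewrite -mem_pairset.
Qed.

Lemma pairset_cat u v : pairset (u ++ v) = pairset u `|` pairset v.
Proof. by apply/fsetP => x; rewrite in_fsetU !mem_pairset flat_cat mem_cat. Qed.

Lemma all2_nthP (U : Type) (x0 : U) (r : rel U) x y :
  (size x = size y /\ forall i, i < size x -> r (nth x0 x i) (nth x0 y i)) <-> all2 r x y.
Proof.
elim: x y => [|a x IH] [|b y] /=; split => //; try by case.
- case=> [[hs] h]; apply/andP; split; first exact: (h 0).
  by apply/IH; split => // i hi; apply: (h i.+1).
- by case/andP=> h1 /IH [h2 h3]; split; [rewrite h2 | case].
Qed.

Lemma all2_size (U : Type) (r : rel U) v w : all2 r v w -> size v = size w.
Proof. by elim: v w => [|a v IH] [|b w] //= /andP [_ /IH ->]. Qed.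

Lemma all2_refl (s : seq nat) : all2 leq s s.
Proof. by elim: s => //= x s ->; rewrite leqnn. Qed.

Lemma all2_cat (U : Type) (r : rel U) s1 s2 t1 t2 : size s1 = size t1 ->
  all2 r (s1 ++ s2) (t1 ++ t2) = all2 r s1 t1 && all2 r s2 t2.
Proof. by elim: s1 t1 => [|a s1 IH] [|b t1] //= [/IH ->]; rewrite andbA. Qed.

Lemma all2_map_succ s : all2 leq s (map succn s).
Proof. by elim: s => //= x s ->; rewrite leqnSn. Qed.

Lemma all2_all_up (f : pred nat) s t :
  (forall a b, a <= b -> f a -> f b) -> all2 leq s t -> all f s -> all f t.
Proof.
move=> hf; elim: s t => [|a s IH] [|b t] //= /andP [hab hst] /andP [ha hs].
by rewrite (hf a b) // IH.
Qed.

Lemma all2_all_down (f : pred nat) s t :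
  (forall a b, a <= b -> f b -> f a) -> all2 leq s t -> all f t -> all f s.
Proof.
move=> hf; elim: s t => [|a s IH] [|b t] //= /andP [hab hst] /andP [hb ht].
by rewrite (hf a b) // (IH t).
Qed.

Lemma all2_sumn x y : all2 leq x y -> sumn x <= sumn y /\ (sumn x = sumn y -> x = y).
Proof.
elim: x y => [|a x IH] [|b y] //= /andP [hab /IH [hle heq]]; split; first lia.
move=> he; have eab : a = b by lia.
by rewrite eab heq //; lia.
Qed.

Lemma card_vecof G : #|` G| = size (vecof G).
Proof. by rewrite /vecof size_sort. Qed.

Lemma all2_flat (r : rel nat) u w : (forall a b, r a.+1 b.+1 = r a b) ->
  all2 r (flat u) (flat w) = all2 r u w.
Proof. by move=> hr; elim: u w => [|a u IH] [|b w] //=; rewrite hr IH andbA andbb. Qed.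

Lemma lep_pairset u w : gapped u -> gapped w ->
  lep (pairset u) (pairset w) <-> all2 leq u w.
Proof.
move=> hu hw; rewrite /lep !card_vecof !vecof_pairset // -(all2_flat (r := leq)) //.
exact: all2_nthP.
Qed.

Lemma ltp_pairset u w : gapped u -> gapped w ->
  ltp (pairset u) (pairset w) <-> all2 (fun a b => a < b) u w.
Proof.
move=> hu hw; rewrite /ltp !card_vecof !vecof_pairset //.
by rewrite -(all2_flat (r := fun a b => a < b)) //; apply: all2_nthP.
Qed.

Lemma lep_refl A : lep A A.
Proof. by split. Qed.

Lemma lep_trans A B C : lep A B -> lep B C -> lep A C.
Proof.
case=> eAB hAB [eBC hBC]; split; first by rewrite eAB.
by move=> i hi; apply: leq_trans (hAB i hi) (hBC i _); rewrite -eAB.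
Qed.

Lemma lep_sumn_lt A B : lep A B -> A <> B -> sumn (vecof A) < sumn (vecof B).
Proof.
case=> eAB hAB neAB; have /all2_sumn [hle heq] : all2 leq (vecof A) (vecof B).
  by apply/(all2_nthP 0); rewrite -!card_vecof.
rewrite ltn_neqAle hle andbT; apply/eqP => /heq eV; apply: neAB.
by apply/fsetP => x; rewrite -mem_vecof eV mem_vecof.
Qed.

Fixpoint run (j l : nat) : seq nat := if l is l'.+1 then j :: run j.+2 l' else [::].

Lemma size_run j l : size (run j l) = l.
Proof. by elim: l j => //= l IH j; rewrite IH. Qed.

Lemma run_lb j l : all (fun x => j <= x) (run j l).
Proof. elim: l j => //= l IH j; rewrite leqnn; apply: sub_all (IH j.+2) => x /=; lia. Qed.

Lemma mem_flat_run j l x : (x \in flat (run j l)) = (j <= x < j + 2 * l).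
Proof.
elim: l j => [|l IH] j /=; first by rewrite in_nil; lia.
rewrite !inE IH; case: (eqVneq x j) => [->|]; first lia.
case: (eqVneq x j.+1) => [->|] /=; lia.
Qed.

Lemma pairset_run j l : 1 <= l -> interval j (j + 2 * l - 1) = pairset (run j l).
Proof. by move=> hl; apply/fsetP => x; rewrite mem_interval mem_pairset mem_flat_run; lia. Qed.

Lemma map_succ_run j l : map succn (run j l) = run j.+1 l.
Proof. by elim: l j => //= l IH j; rewrite IH. Qed.

Lemma run_shift_le j l : all2 leq (run j l) (run j.+1 l).
Proof. by elim: l j => //= l IH j; rewrite leqnSn IH. Qed.

Lemma gapped_run_cat j l h : gapped h -> all (fun x => j + 2 * l <= x) h ->
  gapped (run j l ++ h).
Proof.
elim: l j => [|l IH] j hh hlb //.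
have hrest : gapped (run j.+2 l ++ h) by apply: IH => //; apply: sub_all hlb => x /=; lia.
change (gapped (j :: (run j.+2 l ++ h))); rewrite gapped_cons hrest andbT all_cat.
apply/andP; split; first by apply: sub_all (run_lb j.+2 l).
by apply: sub_all hlb => x; rewrite /gap2; lia.
Qed.

Lemma run_le_take m L s : gapped s -> all (fun x => m <= x) s -> L <= size s ->
  all2 leq (run m L) (take L s).
Proof.
elim: L m s => [|L IH] m [|x s] hg ha hL //=.
case/andP: ha => hx _; rewrite hx IH //; first exact: gapped_tail hg.
move: hg; rewrite gapped_cons => /andP [h _].
by apply: sub_all h => y; rewrite /gap2; lia.
Qed.

Lemma drop_lb m L s : gapped s -> all (fun x => m <= x) s ->
  all (fun x => m + 2 * L <= x) (drop L s).
Proof.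
elim: L m s => [|L IH] m [|x s] hg ha //=; first by rewrite muln0 addn0.
apply: sub_all (IH m.+2 s (gapped_tail hg) _) => [y /=|]; first lia.
move: hg ha; rewrite gapped_cons => /andP [h _] /andP [hx _].
by apply: sub_all h => y; rewrite /gap2; lia.
Qed.

Lemma run_decomposition j s : gapped (j :: s) -> exists L A,
  [/\ 1 <= L, j :: s = run j L ++ A & all (fun x => j + 2 * L < x) A].
Proof.
elim: s j => [|p s IH] j hg; first by exists 1, [::].
have hjp : j.+2 <= p by move: hg; rewrite gapped_cons => /andP [/andP [h _] _].
case: (eqVneq p j.+2) => [ep|np].
- subst p; case: (IH j.+2 (gapped_tail hg)) => L [A [hL e ha]].
  exists L.+1, A; split => //; first by rewrite e.
  by apply: sub_all ha => x /=; lia.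
- exists 1, (p :: s); split => //.
  by apply: sub_all (gapped_head_lb (gapped_tail hg)) => x /=; lia.
Qed.

Lemma gapped_cat_lt t1 t2 x y : gapped (t1 ++ t2) -> x \in flat t1 -> y \in t2 -> x < y.
Proof.
elim: t1 => [|i t1 IH] // hg; rewrite /= !inE => hx hy.
move: hg; rewrite cat_cons gapped_cons => /andP [/allP /(_ y) hiy hg].
have : gap2 i y by apply: hiy; rewrite mem_cat hy orbT.
rewrite /gap2; case/orP: hx => [/eqP ->|/orP [/eqP ->|hx]]; try lia.
by rewrite IH.
Qed.

Lemma exists_maximal (T : Type) (Q : T -> Prop) (le : T -> T -> Prop) (mu : T -> nat) N x :
  (forall x y z, le x y -> le y z -> le x z) -> (forall x, le x x) ->
  (forall x y, le x y -> x <> y -> mu x < mu y) -> (forall y, Q y -> mu y <= N) -> Q x ->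
  exists y, [/\ Q y, le x y & forall z, Q z -> le y z -> z = y].
Proof.
move=> le_trans le_refl mu_lt mu_bound.
have [d] := ubnP (N - mu x); elim: d x => // d IH x hd Qx.
case: (classic (exists z, [/\ Q z, le x z & z <> x])) => [[z [Qz hxz nzx]]|hmax].
- have [|y [Qy hzy hy]] := IH z _ Qz.
    by have := mu_lt _ _ hxz (nesym nzx); have := mu_bound _ Qz; lia.
  by exists y; split => //; apply: le_trans hzy.
- exists x; split => // z Qz hxz; apply: NNPP => nzx; apply: hmax; by exists z.
Qed.

Definition below (X : {fset {fset nat}}) (v : seq nat) : Prop :=
  exists2 F, F \in X & lep (pairset v) F.

Definition pair_family (k n : nat) (X : {fset {fset nat}}) : Prop :=
  forall F, F \in X -> Fam2 k 1 n F.

Definition tail (r m n : nat) (h : seq nat) : Prop :=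
  [/\ size h = r, gapped h & all (fun i => (m <= i) && (i.+1 <= n)) h].

Lemma Fam2_tail r m n H : Fam2 r m n H <-> exists2 h, H = pairset h & tail r m n h.
Proof.
split; first by case=> h [hs [hg [ha ->]]]; exists h.
by case=> h -> [hs hg ha]; exists h.
Qed.

Lemma gapped_cons_tail i r m n h : i.+2 <= m -> tail r m n h -> gapped (i :: h).
Proof.
move=> him [_ gh bh]; rewrite gapped_cons gh andbT.
by apply: sub_all bh => x /andP [hx _]; rewrite /gap2; lia.
Qed.

Lemma tail_weaken r m m' n h : m' <= m -> tail r m n h -> tail r m' n h.
Proof. by move=> hm [hs hg ha]; split => //; apply: sub_all ha => x /andP [h1 ->]; lia. Qed.

Lemma below_mono X u v : gapped u -> gapped v -> all2 leq u v -> below X v -> below X u.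
Proof. by move=> hu hv huv [F hF hvF]; exists F => //; apply: lep_trans hvF; apply/lep_pairset. Qed.

Lemma below_bound k n X v : pair_family k n X -> gapped v -> below X v ->
  size v = k /\ all (fun i => i.+1 <= n) v.
Proof.
move=> hX hv [F /hX /Fam2_tail [w -> [hw hgw haw]]] /(lep_pairset hv hgw) hvw.
split; first by rewrite (all2_size hvw).
apply: all2_all_down hvw _; first by move=> a b; lia.
by apply: sub_all haw => x /andP [].
Qed.

Lemma below_succ k n X Y v : pair_family k n X -> pair_family k n Y -> precp Y X ->
  gapped v -> below Y v -> below X (map succn v).
Proof.
move=> hX hY hYX hv [G hG hvG]; have [F hF hGF] := hYX G hG.
have /Fam2_tail [g eG [_ hgg _]] := hY G hG.
have /Fam2_tail [f eF [_ hgf _]] := hX F hF.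
subst G F; exists (pairset f) => //; apply/lep_pairset; rewrite ?gapped_map_succ //.
move/(lep_pairset hv hgg): hvG; move/(ltp_pairset hgg hgf): hGF.
elim: v g f {hv hgg hgf hF hG} => [|a v IH] [|b g] [|c f] //= /andP [hbc hgf] /andP [hab hvg].
by rewrite (IH g) // andbT; lia.
Qed.

Lemma pairset_sub_lb f a b : pairset f `<=` interval a b -> all (fun x => a <= x) f.
Proof.
move=> hsub; apply/allP => x hx.
have : x \in pairset f by rewrite mem_pairset mem_flat; apply/hasP; exists x; rewrite ?eqxx.
by move/(fsubsetP hsub); rewrite mem_interval => /andP [].
Qed.

Lemma sumn_le_size n s : all (fun x => x <= n) s -> sumn s <= size s * n.
Proof. by elim: s => //= x s IH /andP [hx /IH hs]; rewrite mulSn; lia. Qed.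

Lemma SJ_lower k n X j l F' h : 1 <= l -> SJ k n X j l F' -> lep (pairset h) F' ->
  gapped h -> all (fun x => j + 2 * l <= x) h -> below X (run j l ++ h).
Proof.
move=> hl [[/Fam2_tail [f -> [_ hgf _]] [hsub [_ [F [hF hJF]]]]] _] hhf hgh hlbh.
have hlbf := pairset_sub_lb hsub.
exists F => //; apply: lep_trans hJF; rewrite pairset_run // -pairset_cat.
apply/lep_pairset; rewrite ?gapped_run_cat // all2_cat // all2_refl.
exact/lep_pairset.
Qed.

Lemma SJ_upper k n X j l h : pair_family k n X -> 1 <= l <= k -> 1 <= j ->
  tail (k - l) (j + 2 * l) n h -> below X (run j l ++ h) ->
  exists2 G, SJ k n X j l G & lep (pairset h) G.
Proof.
move=> hX /andP [hl hlk] hj th hbelow; have [hs hgh hah] := th.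
have hlbh : all (fun x => j + 2 * l <= x) h by apply: sub_all hah => x /andP [].
have hgc := gapped_run_cat hgh hlbh.
have [_ hubc] := below_bound hX hgc hbelow.
set Q := fun H => Fam2 (k - l) 1 n H /\ H `<=` interval (j + 2 * l) n /\
                  ideal k n (fun F => F \in X) (interval j (j + 2 * l - 1) `|` H).
have Qh : Q (pairset h).
  split; first by apply/Fam2_tail; exists h => //; apply: tail_weaken th; lia.
  split.
    apply/fsubsetP => x; rewrite mem_pairset mem_flat => /hasP [i hi hxi].
    by move/allP: hah => /(_ i hi); rewrite mem_interval; case/orP: hxi => /eqP ->; lia.
  rewrite pairset_run // -pairset_cat; split; last by case: hbelow => F; exists F.
  apply/Fam2_tail; exists (run j l ++ h) => //; split => //.
    by rewrite size_cat size_run hs; lia.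
  apply/allP => x hx; rewrite (allP hubc x hx) andbT.
  move: hx; rewrite mem_cat => /orP [/(allP (run_lb j l))|/(allP hlbh)] /=; lia.
have Qbound : forall G, Q G -> sumn (vecof G) <= (2 * (k - l)) * n.
  move=> G [/Fam2_tail [g -> [hsg hgg _]] [hsub _]].
  apply: leq_trans (sumn_le_size (n := n) _) _; last by rewrite vecof_pairset // size_flat hsg.
  apply/allP => x; rewrite mem_vecof => /(fsubsetP hsub).
  by rewrite mem_interval => /andP [].
have [G [QG hhG Gmax]] := exists_maximal lep_trans lep_refl lep_sumn_lt Qbound Qh.
by exists G.
Qed.

Lemma Bfacets_pairset k l n X j m h : 1 <= l <= k -> 1 <= j -> j + 2 * l <= m ->
  pair_family k n X -> tail (k - l) m n h ->
  Bfacets k l n (SJ k n X j l) m (pairset h) <-> below X (run j l ++ h).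
Proof.
move=> hl hj hm hX th; have [hs hgh hah] := th.
split.
- case=> [[_ [F' [hSJ hhF']]] _]; apply: SJ_lower _ hSJ hhF' hgh _.
    by case/andP: hl.
  by apply: sub_all hah => x /andP [hx _]; lia.
- move=> hbelow; split; last by apply/Fam2_tail; exists h.
  split; first by apply/Fam2_tail; exists h => //; apply: tail_weaken th; lia.
  have [|G hSJ hhG] := SJ_upper hX hl hj _ hbelow; last by exists G.
  exact: tail_weaken th.
Qed.

Lemma join_cdiff_full (fX fY : {fset nat} -> Prop) V s :
  join (cdiff fX fY) (full V) s <-> exists F, [/\ fX F, ~ fY F & s `<=` F `|` V].
Proof.
split.
- case=> a [b [[F [[fXF nfYF] aF]] [bV ->]]].
  by exists F; split => //; apply: fsetUSS.
- case=> F [fXF nfYF sFV]; exists (s `&` F), (s `\` F); split; last split.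
  + by exists F; split => //; apply: fsubsetIr.
  + apply/fsubsetP => x; rewrite in_fsetD => /andP [nxF xs].
    by move/fsubsetP: sFV => /(_ x xs); rewrite in_fsetU (negbTE nxF).
  + by rewrite fsetID.
Qed.

Lemma complex_char k n X Y jX jY l m V s : 1 <= l <= k -> 1 <= jX -> 1 <= jY ->
  jX + 2 * l <= m -> jY + 2 * l <= m -> pair_family k n X -> pair_family k n Y ->
  join (cdiff (Bfacets k l n (SJ k n X jX l) m) (Bfacets k l n (SJ k n Y jY l) m)) (full V) s <->
  exists h, [/\ tail (k - l) m n h, below X (run jX l ++ h), ~ below Y (run jY l ++ h)
                & s `<=` pairset h `|` V].
Proof.
move=> hl hjX hjY hmX hmY hX hY; rewrite join_cdiff_full; split.
- case=> F [fXF nfYF sF]; have [_ /Fam2_tail [h eF th]] := fXF; subst F.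
  exists h; split => //; first exact/(Bfacets_pairset hl hjX hmX hX th).
  by move/(Bfacets_pairset hl hjY hmY hY th).
- case=> h [th bX nbY sF]; exists (pairset h); split => //.
    exact/(Bfacets_pairset hl hjX hmX hX th).
  by move/(Bfacets_pairset hl hjY hmY hY th).
Qed.

Lemma D_char k n X Y i s : 1 <= k -> 1 <= i -> pair_family k n X -> pair_family k n Y ->
  D k n X Y i s <-> exists h, [/\ tail (k - 1) (i + 2) n h, below X (i :: h),
                                  ~ below Y (i :: h) & s `<=` pairset h `|` interval i (i + 1)].
Proof.
by move=> hk hi; apply: (complex_char (l := 1) (m := i + 2) (jX := i) (jY := i)); lia.
Qed.

Lemma Gamma_char k n X Y j l s : 1 <= l <= k -> 1 <= j -> pair_family k n X -> pair_family k n Y ->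
  join (Gamma k n X Y j l) (full (interval (j + 1) (j + 2 * l - 1))) s <->
  exists h, [/\ tail (k - l) (j + 2 * l + 1) n h, below X (run j.+1 l ++ h),
                ~ below Y (run j l ++ h) & s `<=` pairset h `|` interval (j + 1) (j + 2 * l - 1)].
Proof.
move=> hl hj; rewrite -[j.+1]addn1.
by apply: (complex_char (m := j + 2 * l + 1) (jX := j + 1) (jY := j)); lia.
Qed.

Local Close Scope fset_scope.

(* [push H] raises the head of H by one and, to keep the gaps, also every following entry
   that sat at the minimal distance 2 from its predecessor. *)
Fixpoint push (H : seq nat) : seq nat :=
  if H is p :: H' then
    p.+1 :: (if H' is p' :: _ then (if p' == p.+2 then push H' else H') else [::])
  else [::].

Lemma push_cons p H' : push (p :: H') =
  p.+1 :: (if H' is p' :: _ then (if p' == p.+2 then push H' else H') else [::]).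
Proof. by []. Qed.

Lemma push_ge H : all2 leq H (push H).
Proof.
elim: H => //= p [|p' H''] IH; rewrite leqnSn //=.
by case: eqP => // _; rewrite /= leqnn all2_refl.
Qed.

Lemma push_le H : all2 leq (push H) (map succn H).
Proof.
elim: H => //= p [|p' H''] IH; rewrite leqnn //=.
by case: eqP => // _; rewrite /= leqnSn all2_map_succ.
Qed.

Lemma push_sum p H' : sumn (p :: H') < sumn (push (p :: H')).
Proof.
rewrite push_cons /=.
suff : sumn H' <= sumn (if H' is p' :: _ then (if p' == p.+2 then push H' else H') else [::]).
  by lia.
case: H' => // p' H''; case: eqP => _ //.
by case: (all2_sumn (push_ge (p' :: H''))).
Qed.

Lemma push_gapped H : gapped H -> gapped (push H).
Proof.
elim: H => [//|p [|p' H''] IH] hg //; have hg' := gapped_tail hg.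
move: hg; rewrite gapped_cons => /andP [/andP [hp _] _]; rewrite /gap2 in hp.
rewrite push_cons; case: eqP => [ep|np].
- have := IH hg'; rewrite push_cons => hr.
  by rewrite gapped_cons hr andbT; apply: sub_all (gapped_head_lb hr) => x; rewrite /gap2; lia.
- rewrite gapped_cons hg' andbT; apply/allP => x hx.
  move/allP: (gapped_head_lb hg') => /(_ x hx); rewrite /gap2.
  move: hx; rewrite inE => /orP [/eqP ->|hx]; first lia.
  by move: hg'; rewrite gapped_cons => /andP [/allP /(_ x hx)]; rewrite /gap2; lia.
Qed.

Lemma push_keeps p H' x : x \in flat (p :: H') -> x != p -> x \in flat (push (p :: H')).
Proof.
elim: H' p x => [|p' H'' IH] p x; first by rewrite /= !inE => /orP [] ->.
rewrite push_cons /= !inE; case/orP => [->//|/orP [->//|hx] _].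
case: (eqVneq p' p.+2) => [ep|np]; last by rewrite /= !inE hx !orbT.
case: (eqVneq x p') => [ex|nx]; first by rewrite ex ep eqxx !orbT.
by rewrite (IH p' x hx nx) !orbT.
Qed.

Lemma push_below p H' q A' : gapped (p :: H') -> gapped (q :: A') ->
  all2 leq (p :: H') (q :: A') -> p < q -> all2 leq (push (p :: H')) (q :: A').
Proof.
elim: H' p q A' => [|p' H'' IH] p q [|q' A''] hg1 hg2 hle hpq;
  try by move: hle; rewrite /= andbF.
  by rewrite push_cons /= hpq.
rewrite push_cons /= hpq /=; case/andP: hle => _ hle; case: eqP => [ep|np] //.
apply: IH => //; [exact: gapped_tail hg1 | exact: gapped_tail hg2|].
by move: hg2; rewrite gapped_cons => /andP [/andP [h _] _]; rewrite /gap2 in h; lia.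
Qed.

Fixpoint step (H A : seq nat) : seq nat :=
  match H, A with
  | p :: H', q :: A' => if p == q then p :: step H' A' else push H
  | _, _ => H
  end.

Lemma step_cons p H' q A' :
  step (p :: H') (q :: A') = if p == q then p :: step H' A' else push (p :: H').
Proof. by []. Qed.

Lemma step_ge H A : all2 leq H (step H A).
Proof.
elim: H A => [|p H' IH] [|q A'] //; try exact: all2_refl.
by rewrite step_cons; case: eqP => _; [rewrite /= leqnn IH | exact: push_ge].
Qed.

Lemma step_le H A : all2 leq (step H A) (map succn H).
Proof.
elim: H A => [|p H' IH] [|q A'] //; try exact: all2_map_succ.
by rewrite step_cons; case: eqP => _; [rewrite /= leqnSn IH | exact: push_le].
Qed.

Lemma step_gapped H A : gapped H -> gapped (step H A).
Proof.
elim: H A => [|p H' IH] [|q A'] hg //; rewrite step_cons; case: eqP => _; last exact: push_gapped.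
move: hg; rewrite !gapped_cons => /andP [ha hg]; rewrite IH // andbT.
by apply: (all2_all_up _ (step_ge H' A') ha) => a b; rewrite /gap2; lia.
Qed.

Lemma step_below H A : gapped H -> gapped A -> all2 leq H A -> all2 leq (step H A) A.
Proof.
elim: H A => [|p H' IH] [|q A'] hg1 hg2 hle //; rewrite step_cons; case: eqP => [ep|np].
- subst q; case/andP: hle => _ hle.
  by rewrite /= leqnn IH //; [exact: gapped_tail hg1 | exact: gapped_tail hg2].
- by apply: push_below => //; case/andP: hle => h _; rewrite ltn_neqAle h andbT; apply/eqP.
Qed.

Lemma step_sum H A : all2 leq H A -> H <> A -> sumn H < sumn (step H A).
Proof.
elim: H A => [|p H' IH] [|q A'] hle hne //; rewrite step_cons; case: eqP => [ep|np].
- subst q; case/andP: hle => _ hle.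
  have : sumn H' < sumn (step H' A') by apply: IH => // e; apply: hne; rewrite e.
  by rewrite /=; lia.
- exact: push_sum.
Qed.

Lemma step_keeps H A x : gapped H -> gapped A -> all2 leq H A ->
  x \in flat H -> x \in flat A -> x \in flat (step H A).
Proof.
elim: H A => [|p H' IH] [|q A'] hg1 hg2 hle //; rewrite step_cons; case: eqP => [ep|np].
- subst q; case/andP: hle => _ hle; rewrite /= !inE.
  case/orP => [->//|/orP [->|h1]]; first by rewrite orbT.
  case/orP => [/eqP ex|/orP [/eqP ex|h2]]; rewrite ?ex ?eqxx ?orbT //.
  by rewrite (IH A') ?orbT //; [exact: gapped_tail hg1 | exact: gapped_tail hg2].
- move=> h1 h2; apply: push_keeps => //.
  have hq := flat_lb (gapped_head_lb hg2) h2; case/andP: hle => hpq _.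
  by apply/eqP => ex; subst x; apply: np; lia.
Qed.

Fixpoint seqmin (A B : seq nat) : seq nat :=
  match A, B with
  | a :: A', b :: B' => minn a b :: seqmin A' B'
  | _, _ => [::]
  end.

Lemma seqmin_lb m A B : all (fun x => m <= x) A -> all (fun x => m <= x) B ->
  all (fun x => m <= x) (seqmin A B).
Proof.
elim: A B => [|a A IH] [|b B] //= /andP [ha hA] /andP [hb hB].
by rewrite IH // andbT; lia.
Qed.

Lemma seqmin_gapped A B : gapped A -> gapped B -> gapped (seqmin A B).
Proof.
elim: A B => [|a A IH] [|b B] //; rewrite [seqmin _ _]/= !gapped_cons.
move=> /andP [ha hA] /andP [hb hB].
rewrite IH // andbT; apply: (@seqmin_lb (minn a b).+2).
  by apply: sub_all ha => x; rewrite /gap2; lia.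
by apply: sub_all hb => x; rewrite /gap2; lia.
Qed.

Lemma seqmin_le_l A B : size A = size B -> all2 leq (seqmin A B) A.
Proof. by elim: A B => [|a A IH] [|b B] //= [/IH ->]; rewrite geq_minl. Qed.

Lemma seqmin_le_r A B : size A = size B -> all2 leq (seqmin A B) B.
Proof. by elim: A B => [|a A IH] [|b B] //= [/IH ->]; rewrite geq_minr. Qed.

Lemma seqmin_keeps_l A B x : size A = size B -> x \in flat A ->
  all (fun y => x < y) B -> x \in flat (seqmin A B).
Proof.
elim: A B => [|a A IH] [|b B] // [hs]; rewrite [seqmin _ _]/= !mem_flat_cons.
case/orP=> [hx|hx] /andP [hb hB]; first by apply/orP; left; lia.
by rewrite IH ?orbT.
Qed.

Lemma seqmin_keeps_r A B x : size A = size B -> x \in flat B ->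
  all (fun y => x < y) A -> x \in flat (seqmin A B).
Proof.
elim: A B => [|a A IH] [|b B] // [hs]; rewrite [seqmin _ _]/= !mem_flat_cons.
case/orP=> [hx|hx] /andP [ha hA]; first by apply/orP; left; lia.
by rewrite IH ?orbT.
Qed.

Lemma seqmin_keeps A B x : size A = size B -> gapped A -> gapped B ->
  x \in flat A -> x \in flat B -> x \in flat (seqmin A B).
Proof.
elim: A B => [|a A IH] [|b B] // [hs]; rewrite [seqmin _ _]/= !gapped_cons.
move=> /andP [gA hA] /andP [gB hB]; rewrite !mem_flat_cons.
case/orP=> [xa|xA] /orP [xb|xB]; first by apply/orP; left; lia.
- rewrite seqmin_keeps_r ?orbT //; apply: sub_all gA => y; rewrite /gap2; lia.
- rewrite seqmin_keeps_l ?orbT //; apply: sub_all gB => y; rewrite /gap2; lia.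
- by rewrite IH ?orbT.
Qed.

(* Fix a sequence run j L ++ A outside the ideal PT. Starting from a tail H
   below A with run j.+1 L ++ H in the ideal PS, repeatedly step H towards A: while
   run j L ++ H stays in PT, the shift T <_p S keeps run j.+1 L ++ (step H A) in PS.
   The process strictly raises the sum of H and cannot reach A, so it stops outside PT. *)
Section Descent.

Variables (PS PT : seq nat -> Prop) (j L : nat) (A : seq nat) (keep : pred nat).
Hypothesis PS_mono : forall u v, gapped u -> gapped v -> all2 leq u v -> PS v -> PS u.
Hypothesis PT_shift : forall v, gapped v -> PT v -> PS (map succn v).
Hypothesis gapped_A : gapped A.
Hypothesis notPT_A : ~ PT (run j L ++ A).

(* The invariant of the descent; the vertices of A satisfying [keep] are never lost. *)
Definition candidate (H : seq nat) : Prop :=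
  [/\ gapped H, all2 leq H A, all (fun x => j + 2 * L < x) H,
      (forall x, x \in flat A -> keep x -> x \in flat H) & PS (run j.+1 L ++ H)].

Lemma candidate_step H : candidate H -> PT (run j L ++ H) -> candidate (step H A).
Proof.
case=> gH hHA lbH keepH PSH PTH.
have lbS : all (fun x => j + 2 * L < x) (step H A).
  by apply: (all2_all_up _ (step_ge H A) lbH) => a b; lia.
split => //; [exact: step_gapped | exact: step_below | |].
- by move=> x xA kx; apply: step_keeps => //; apply: keepH.
- have gHL : gapped (run j L ++ H).
    by apply: gapped_run_cat => //; apply: sub_all lbH => x /=; lia.
  have := PT_shift gHL PTH; rewrite map_cat map_succ_run; apply: PS_mono.
  + by apply: gapped_run_cat; [exact: step_gapped | apply: sub_all lbS => x /=; lia].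
  + apply: gapped_run_cat; first exact: gapped_map_succ.
    by rewrite all_map; apply: sub_all lbH => x /=; lia.
  + by rewrite all2_cat ?size_run // all2_refl step_le.
Qed.

Lemma descent H : candidate H -> exists H', candidate H' /\ ~ PT (run j L ++ H').
Proof.
have [d] := ubnP (sumn A - sumn H); elim: d H => // d IH H hd cH.
case: (classic (PT (run j L ++ H))) => PTH; last by exists H.
have cS := candidate_step cH PTH.
have [_ hHA _ _ _] := cH; have [_ hSA _ _ _] := cS.
have neHA : H <> A by move=> eHA; apply: notPT_A; rewrite -eHA.
have := step_sum hHA neHA; have [hle _] := all2_sumn hSA.
by move=> hlt; apply: IH cS; lia.
Qed.

End Descent.

Lemma common_facet (PS PT : seq nat -> Prop) j a b :
  (forall u v, gapped u -> gapped v -> all2 leq u v -> PS v -> PS u) ->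
  (forall v, gapped v -> PT v -> PS (map succn v)) ->
  gapped (j :: a) -> gapped (j.+1 :: b) -> size a = size b ->
  ~ PT (j :: a) -> PS (j.+1 :: b) ->
  exists (L : nat) (H : seq nat), [/\ 1 <= L, L + size H = (size a).+1, gapped H
                   & all (fun x => j + 2 * L < x) H] /\
    [/\ PS (run j.+1 L ++ H), ~ PT (run j L ++ H) &
         forall x, x \in flat (j :: a) -> x \in flat (j.+1 :: b) ->
           x \in flat H \/ j < x < j + 2 * L].
Proof.
move=> PS_mono PT_shift ga gc sab nPTa PSc.
have [L [A [hL eA lbA]]] := run_decomposition ga.
set c := j.+1 :: b in gc PSc *; set B := drop L c.
have gA : gapped A by move: ga; rewrite eA => /cat_sorted2 [].
have szA : L + size A = (size a).+1 by rewrite -(size_run j L) -size_cat -eA.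
have szB : size A = size B by rewrite size_drop /= -sab; lia.
have lbc : all (fun x => j.+1 <= x) c := gapped_head_lb gc.
have lbB : all (fun x => j + 2 * L < x) B by apply: sub_all (drop_lb L gc lbc) => x /=; lia.
have gB : gapped B := drop_sorted L gc.
have lb0 : all (fun x => j + 2 * L < x) (seqmin A B) := seqmin_lb lbA lbB.
have gH0 : gapped (seqmin A B) := seqmin_gapped gA gB.
have cand0 : candidate PS j L A (fun x => x \in flat c) (seqmin A B).
  split; [exact: gH0 | exact: seqmin_le_l | exact: lb0 | |].
  - move=> x xA; rewrite -(cat_take_drop L c) flat_cat mem_cat => /orP [xt|xB].
      apply: seqmin_keeps_l => //; apply/allP => y yB.
      by apply: gapped_cat_lt xt yB; rewrite cat_take_drop.
    exact: seqmin_keeps szB gA gB xA xB.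
  - apply: PS_mono PSc; [ | exact: gc | ].
    + by apply: gapped_run_cat gH0 _; apply: sub_all lb0 => x /=; lia.
    + rewrite -(cat_take_drop L c) all2_cat ?size_run ?size_takel /= ?seqmin_le_r ?andbT //;
        try lia.
      by apply: run_le_take => //=; lia.
have [|H [[gH hHA lbH keepH PSH] nPTH]] := descent PS_mono PT_shift gA _ cand0.
  by rewrite -eA.
exists L, H; split; first by split => //; rewrite (all2_size hHA).
split => // x; rewrite eA flat_cat mem_cat mem_flat_run => /orP [xrun|xA] xc.
  by right; have := flat_lb lbc xc; lia.
by left; apply: keepH.
Qed.

Local Open Scope fset_scope.

Lemma mem_pairset_head i t x :
  (x \in pairset t `|` interval i (i + 1)) = (x \in flat (i :: t)).
Proof. by rewrite in_fsetU mem_pairset mem_interval mem_flat_cons addn1 orbC. Qed.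

Lemma D_from_run k n X Y i l h s : 1 <= k -> 1 <= i -> 1 <= l ->
  pair_family k n X -> pair_family k n Y -> gapped h -> all (fun x => i + 2 * l <= x) h ->
  below X (run i l ++ h) -> ~ below Y (run i l ++ h) ->
  s `<=` pairset (run i l ++ h) -> D k n X Y i s.
Proof.
case: l => // l hk hi _ hX hY gh lbh bX nbY sub.
have gc := gapped_run_cat gh lbh; have [szc ubc] := below_bound hX gc bX.
move: gc ubc szc bX nbY sub; set t := run i.+2 l ++ h; rewrite [run _ _ ++ _]/= -/t.
rewrite gapped_cons => /andP [lbt gt] /andP [_ ubt] /= szt bX nbY sub.
apply/(D_char _ hk hi hX hY); exists t; split => //.
- split => //; first lia.
  apply/allP => x xt; rewrite (allP ubt x xt) andbT.
  by move/allP: lbt => /(_ x xt); rewrite /gap2; lia.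
- by apply/fsubsetP => x /(fsubsetP sub); rewrite mem_pairset_head mem_pairset.
Qed.

Lemma cap_sub_Gamma k n S T j s : 1 <= k -> 1 <= j ->
  pair_family k n S -> pair_family k n T -> precp T S ->
  cap (D k n S T j) (D k n S T (j + 1)) s ->
  exists l, (1 <= l <= k) /\
    join (Gamma k n S T j l) (full (interval (j + 1) (j + 2 * l - 1))) s.
Proof.
move=> hk hj hS hT hTS [].
case/(D_char _ hk hj hS hT) => a [ta _ nPTa suba].
case/(D_char _ hk (leq_trans hj (leq_addr 1 j)) hS hT) => b [tb PSb _ subb].
rewrite addn1 in tb PSb subb.
have gja : gapped (j :: a) by apply: gapped_cons_tail ta; lia.
have gjb : gapped (j.+1 :: b) by apply: gapped_cons_tail tb; lia.
have [[sza _ _] [szb _ _]] := (ta, tb).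
have [L [H [[hL szH gH lbH] [PSH nPTH cover]]]] :=
  common_facet (@below_mono S) (fun v => below_succ hS hT hTS (v := v)) gja gjb
    (etrans sza (esym szb)) nPTa PSb.
have gRH : gapped (run j.+1 L ++ H).
  by apply: gapped_run_cat => //; apply: sub_all lbH => x /=; lia.
have [_ ubH] := below_bound hS gRH PSH.
have hLk : 1 <= L <= k by rewrite hL /=; lia.
exists L; split => //; apply/(Gamma_char _ hLk hj hS hT); exists H; split => //.
- split => //; first lia.
  apply/allP => x xH; move: ubH; rewrite all_cat => /andP [_ /allP /(_ x xH) ->].
  by move/allP: lbH => /(_ x xH); rewrite andbT; lia.
- apply/fsubsetP => x xs; have := fsubsetP suba x xs; have := fsubsetP subb x xs.
  rewrite !mem_pairset_head => xb xa.
  by rewrite in_fsetU mem_pairset mem_interval; case: (cover x xa xb) => [->|]; [|lia].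
Qed.

Lemma Gamma_sub_cap k n S T j l s : 1 <= k -> 1 <= j -> 1 <= l <= k ->
  pair_family k n S -> pair_family k n T ->
  join (Gamma k n S T j l) (full (interval (j + 1) (j + 2 * l - 1))) s ->
  cap (D k n S T j) (D k n S T (j + 1)) s.
Proof.
move=> hk hj hl hS hT /(Gamma_char _ hl hj hS hT) [h [[szh gh bh] PSh nPTh subh]].
have hl1 : 1 <= l by case/andP: hl.
have lbh i : i <= j.+1 -> all (fun x => i + 2 * l <= x) h.
  by move=> hi; apply: sub_all bh => x /andP [hx _]; lia.
have face i : j <= i <= j.+1 -> s `<=` pairset (run i l ++ h).
  move=> /andP [hji hij]; apply/fsubsetP => x /(fsubsetP subh).
  rewrite in_fsetU mem_interval !mem_pairset flat_cat mem_cat mem_flat_run.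
  by case/orP => [->|]; rewrite ?orbT //; lia.
have shift_le : all2 leq (run j l ++ h) (run j.+1 l ++ h).
  by rewrite all2_cat ?size_run // run_shift_le all2_refl.
have g0 := gapped_run_cat gh (lbh j (leqnSn j)).
have g1 := gapped_run_cat gh (lbh j.+1 (leqnn _)).
split.
- apply: (D_from_run (l := l) hk hj hl1 hS hT gh (lbh j (leqnSn j))) => //.
    exact: below_mono g0 g1 shift_le PSh.
  by apply: face; rewrite leqnn leqnSn.
- rewrite addn1; apply: (D_from_run (l := l) hk (ltn0Sn j) hl1 hS hT gh (lbh j.+1 (leqnn _))) => //.
    by move=> bT; apply: nPTh; apply: below_mono g0 g1 shift_le bT.
  by apply: face; rewrite leqnSn leqnn.
Qed.

Theorem lemma3p9 (k n : nat) (S T : {fset {fset nat}}) (j : nat) :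
  1 <= k -> 2 * k <= n ->
  antichain k n S -> antichain k n T -> precp T S -> 1 <= j ->
  (exists s, D k n S T (j + 1) s) ->
  forall s, cap (D k n S T j) (D k n S T (j + 1)) s <->
    exists l, (1 <= l <= k) /\
      join (Gamma k n S T j l) (full (interval (j + 1) (j + 2 * l - 1))) s.
Proof.
move=> hk _ [hS _] [hT _] hTS hj _ s; split; first exact: cap_sub_Gamma.
by case=> l [hl hG]; apply: Gamma_sub_cap hG.
Qed.
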